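(* Let $\ell$ be a positive odd integer, $p$ an odd prime, and $n$ a positive integer with $p^2\mid\Omega_\ell(n)$. Suppose there exist a divisor $d_1$ of $\ell$ and an integer $a$ with $2\le a\le n$ such that $p\,\|\,a^{d_1}+1$ (i.e. $p\mid a^{d_1}+1$ and $p^2\nmid a^{d_1}+1$), and suppose that $p\nmid b^{\gcd(\ell,p-1)}+1$ for every integer $b$ with $2\le b\le n$, $b\ne a$. Then $p\mid \ell$.
   Context: $\Omega_\ell(n)=\prod_{a=1}^{n}(a^\ell+1)$. *)

From mathcomp Require Import all_boot.
Set Implicit Arguments. Unset Strict Implicit. Unset Printing Implicit Defensive.

Definition Omega (l n : nat) : nat := \prod_(1 <= a < n.+1) (a ^ l + 1).

From mathcomp Require Import all_boot all_algebra all_field.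
Import GRing.Theory.
Set Implicit Arguments. Unset Strict Implicit. Unset Printing Implicit Defensive.

(* Work in the prime field F_p.
   (1) If p | b^l + 1 then p | b^g + 1 for g = gcd(l, p - 1): the image y of b
       satisfies y^l = -1 and y^(p-1) = 1 (Fermat), and a Bezout relation
       u*l = v*(p-1) + g shows y^g = (-1)^u, which must be -1 since y^l <> 1.
   (2) Hence, by hypothesis, a^l + 1 is the only factor of Omega_l(n) divisible
       by p (the factor for b = 1 is 2), so the whole of p^2 divides a^l + 1.
   (3) Lifting the exponent: write l = d1*m with m odd and x = a^d1.  Then
       x^m + 1 = (x + 1) * S with S = sum_(i<m) x^(m-1-i) (-1)^i.  As p exactly
       divides x + 1, p divides S; but x = -1 in F_p, so S = m in F_p.  Hence
       p | m | l. *)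

Lemma expr_gcdn_neg1 (R : pzRingType) (y : R) l e : 0 < l -> (-1 != 1 :> R)%R ->
  (y ^+ l = -1 -> y ^+ e = 1 -> y ^+ gcdn l e = -1)%R.
Proof.
move=> l_gt0 neg1_neq1 yl ye; have [u v bezout _] := egcdnP e l_gt0.
have yg : (y ^+ gcdn l e = (-1) ^+ u)%R.
  by rewrite -yl -exprM mulnC bezout exprD mulnC exprM ye expr1n mul1r.
rewrite yg -signr_odd; case: (boolP (odd u)) => //= u_even.
have : (y ^+ l = 1)%R.
  by rewrite -(divnK (dvdn_gcdl l e)) mulnC exprM yg -signr_odd (negbTE u_even) expr1n.
by rewrite yl => /eqP; rewrite (negbTE neg1_neq1).
Qed.

Lemma expf_card_pred (F : finFieldType) (x : F) : (x != 0 -> x ^+ #|F|.-1 = 1)%R.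
Proof.
move=> x_neq0; apply: (mulfI x_neq0).
by rewrite -exprS prednK ?expf_card ?mulr1 // ltnW // finNzRing_gt1.
Qed.

Lemma dvdn_pow_add1_Fp p b k : prime p ->
  (p %| b ^ k + 1) = ((b%:R : 'F_p) ^+ k == -1)%R.
Proof. by move=> p_pr; rewrite (dvdn_pcharf (pchar_Fp p_pr)) natrD natrX addr_eq0. Qed.

Lemma odd_prime_ndvd2 p : prime p -> odd p -> ~~ (p %| 2).
Proof. by move=> p_pr p_odd; rewrite dvdn_prime2 //; apply: contraL p_odd => /eqP ->. Qed.

Lemma Fp_neg1_neq1 p : prime p -> odd p -> (-1 != 1 :> 'F_p)%R.
Proof.
move=> p_pr p_odd; rewrite eq_sym -addr_eq0 -mulr2n -(dvdn_pcharf (pchar_Fp p_pr)).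
exact: odd_prime_ndvd2.
Qed.

Lemma dvdn_pow_add1_gcd p b l : prime p -> odd p -> 0 < l ->
  p %| b ^ l + 1 -> p %| b ^ gcdn l (p - 1) + 1.
Proof.
move=> p_pr p_odd l_gt0; rewrite !(dvdn_pow_add1_Fp _ _ p_pr) => /eqP yl.
set y : 'F_p := (b%:R)%R in yl *.
have y_neq0 : (y != 0)%R.
  apply/eqP=> y0; move/eqP: yl; rewrite y0 expr0n (gtn_eqF l_gt0).
  by rewrite eq_sym oppr_eq0 oner_eq0.
have yp : (y ^+ (p - 1) = 1)%R by have := expf_card_pred y_neq0; rewrite card_Fp // subn1.
by rewrite (expr_gcdn_neg1 l_gt0 (Fp_neg1_neq1 p_pr p_odd) yl yp).
Qed.

Lemma prime_pow_dvd_prod_single (I : eqType) (r : seq I) (F : I -> nat) p k j :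
  prime p -> uniq r -> j \in r -> {in r, forall i, i != j -> ~~ (p %| F i)} ->
  p ^ k %| \prod_(i <- r) F i -> p ^ k %| F j.
Proof.
move=> p_pr r_uniq jr others; rewrite (bigD1_seq j jr r_uniq) /= Gauss_dvdl //.
rewrite coprimeXl // prime_coprime // Euclid_dvd_prod // big_has_cond.
apply/hasPn => i ir /=; apply/nandP.
by have [->|ij] := eqVneq i j; [left | right; apply: others].
Qed.

Lemma dvdn_Omega_single l p n a k : prime p -> 0 < a <= n ->
  (forall b, 0 < b <= n -> b != a -> ~~ (p %| b ^ l + 1)) ->
  p ^ k %| Omega l n -> p ^ k %| a ^ l + 1.
Proof.
move=> p_pr a_range others.
apply: (prime_pow_dvd_prod_single (F := fun b => b ^ l + 1) p_pr (iota_uniq _ _)).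
  by rewrite mem_index_iota ltnS.
by move=> b; rewrite mem_index_iota ltnS; apply: others.
Qed.

Definition alt_cofactor (R : pzRingType) (x : R) (m : nat) : R :=
  (\sum_(i < m) x ^+ (m.-1 - i) * (-1) ^+ i)%R.

Lemma odd_pow_add1_factor (R : comPzRingType) (x : R) m : odd m ->
  (x ^+ m + 1 = (x + 1) * alt_cofactor x m)%R.
Proof.
move=> m_odd; have := subrXX x (-1) m.
by rewrite -signr_odd m_odd expr1 !opprK.
Qed.

Lemma rmorph_alt_cofactor (R S : pzRingType) (f : {rmorphism R -> S}) x m :
  f (alt_cofactor x m) = alt_cofactor (f x) m.
Proof.
rewrite rmorph_sum; apply: eq_bigr => i _.
by rewrite rmorphM !rmorphXn rmorphN1.
Qed.

(* At x = -1 every term of the cofactor equals 1. *)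
Lemma alt_cofactor_neg1 (R : pzRingType) m : odd m -> alt_cofactor (-1 : R) m = (m%:R)%R.
Proof.
move=> m_odd; rewrite /alt_cofactor -[in RHS](card_ord m) -sumr_const.
apply: eq_bigr => i _; rewrite -exprD subnK; last first.
  by rewrite -ltnS prednK // (leq_ltn_trans _ (ltn_ord i)).
by rewrite -signr_odd; move: m_odd; case: m i => // m i /= /negbTE ->.
Qed.

Lemma lte_odd p x m : prime p -> odd m -> p %| x + 1 -> ~~ (p ^ 2 %| x + 1) ->
  p ^ 2 %| x ^ m + 1 -> p %| m.
Proof.
move=> p_pr m_odd px pp_x pp_xm.
set S : int := alt_cofactor (Posz x) m.
have factorization : x ^ m + 1 = (x + 1) * `|S|%N.
  have := congr1 absz (odd_pow_add1_factor (Posz x) m_odd).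
  by rewrite abszM => <-; rewrite -[Posz x]natz -natrX natz.
have pS : p %| `|S|%N.
  have [k xk] := dvdnP px.
  have pk : ~~ (p %| k).
    by apply: contra pp_x => pk; rewrite xk expnS expn1 mulnC dvdn_mul.
  move: pp_xm; rewrite factorization xk expnS expn1 mulnAC.
  by rewrite dvdn_pmul2r ?prime_gt0 // Euclid_dvdM // (negbTE pk).
have x_neg1 : ((Posz x)%:~R = -1 :> 'F_p)%R.
  by apply/eqP; move: px; rewrite -[x in x + 1]expn1 dvdn_pow_add1_Fp // expr1.
have S_m : (S%:~R = m%:R :> 'F_p)%R.
  by rewrite /S (rmorph_alt_cofactor (intr : int -> 'F_p)) /= x_neg1 alt_cofactor_neg1.
by rewrite (dvdn_pcharf (pchar_Fp p_pr)) -S_m -(dvdz_pcharf (pchar_Fp p_pr)).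
Qed.

Theorem lemma6 (l p n : nat) :
  0 < l -> odd l -> prime p -> odd p -> 0 < n ->
  p ^ 2 %| Omega l n ->
  (exists d1 a : nat,
      [/\ d1 %| l, 2 <= a <= n, p %| a ^ d1 + 1 & ~~ (p ^ 2 %| a ^ d1 + 1)]
      /\ (forall b : nat, 2 <= b <= n -> b != a -> ~~ (p %| b ^ gcdn l (p - 1) + 1))) ->
  p %| l.
Proof.
move=> l_gt0 l_odd p_pr p_odd _ pp_Omega [d1 [a [[d1l a_range pa pp_a] others]]].
have others_l : forall b, 0 < b <= n -> b != a -> ~~ (p %| b ^ l + 1).
  move=> b /andP [b_gt0 b_le_n] ba.
  have [->|b_neq1] := eqVneq b 1; first by rewrite exp1n odd_prime_ndvd2.
  apply: contra (dvdn_pow_add1_gcd (b := b) p_pr p_odd l_gt0) (others b _ ba).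
  by rewrite b_le_n andbT ltn_neqAle eq_sym b_neq1.
have a_in_range : 0 < a <= n by case/andP: a_range => a_ge2 ->; rewrite andbT ltnW.
have pp_al := dvdn_Omega_single p_pr a_in_range others_l pp_Omega.
have [m l_eq] := dvdnP d1l.
have m_odd : odd m by move: l_odd; rewrite l_eq oddM => /andP [].
have pm : p %| m by apply: (lte_odd p_pr m_odd pa pp_a); rewrite -expnM mulnC -l_eq.
by rewrite l_eq dvdn_mulr.
Qed.
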